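(* Consider the disclosure model described in the context. Let $d_F$ be a full-disclosure policy. Then $\Gamma(d_F)\ge\Gamma(d)$ for every Pareto efficient disclosure policy $d\in\mathcal{D}$. That is, full disclosure induces the highest expected emission among all efficient disclosure policies.
   Context: Emissions lie in $E=[0,\bar e]$ with $\bar e>0$. The firm's type $\theta\in\Theta=[\underline\theta,\bar\theta]$ is private information with a continuous density $f=F'$ on $\Theta$. The firm's profit is $\tilde\pi(\theta,e,\tilde e)$ with actual emission $e$ and market-perceived emission $\tilde e$; it is strictly increasing in $e$ and strictly decreasing in $\tilde e$. Standing assumptions: $\tilde\pi$ is continuous on $\Theta\times E\times E$ and $C^2$ on its interior; $\pi(\theta,e):=\tilde\pi(\theta,e,e)$ is strictly concave in $e$; and $\pi(\theta,0)<\pi(\theta,\bar e)$ for all $\theta$. A disclosure policy is a function $d:E\to E$ (a partition of $E$ into level sets). An emission $e$ is belief-compatible under $d$ if $e\ge e'$ whenever $d(e')=d(e)$; $\tilde E_d$ is the set of such levels. The type-$\theta$ firm chooses $e\in\tilde E_d$ maximizing $\pi(\theta,e)$. $\mathcal{D}$ is the set of policies for which the maximum is attained for every type. For $d\in\mathcal{D}$, $\pi_d(\theta)=\max_{e\in\tilde E_d}\pi(\theta,e)$, and $\gamma_d(\theta)$ is the lowest maximizer. Further, $\Pi(d)=\int_\Theta\pi_d\,dF$ and $\Gamma(d)=\int_\Theta\gamma_d\,dF$. A policy $d\in\mathcal{D}$ is Pareto efficient if there is no $d'\in\mathcal{D}$ with $\Pi(d')\ge\Pi(d)$ and $\Gamma(d')\le\Gamma(d)$,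 at least one strict. Let $\hat{\mathbf e}(\theta):=\arg\max_{e\in E}\pi(\theta,e)$. A full-disclosure policy is a policy $d$ such that, for every $e\in\hat{\mathbf e}(\Theta)$, $e$ is alone in its cell: $d(e')=d(e)$ implies $e'=e$. Such a policy belongs to $\mathcal{D}$. *)

From HB Require Import structures.
From mathcomp Require Import all_boot all_order all_algebra.
From mathcomp Require Import all_classical all_reals all_analysis.
Set Implicit Arguments. Unset Strict Implicit. Unset Printing Implicit Defensive.
Import Order.TTheory GRing.Theory Num.Theory.
Import numFieldNormedType.Exports.
Local Open Scope classical_set_scope.
Local Open Scope ring_scope.

Section Model.
Variable R : realType.

Definition Eset (ebar : R) : set R := [set x | 0 <= x <= ebar].
Definition Theta (thl thh : R) : set R := [set x | thl <= x <= thh].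

Definition pi_diag (pt : R -> R -> R -> R) (th e : R) : R := pt th e e.

Definition uncurry3 (pt : R -> R -> R -> R) : R * R * R -> R :=
  fun x => pt x.1.1 x.1.2 x.2.

Definition box (thl thh ebar : R) : set (R * R * R) :=
  [set x | Theta thl thh x.1.1 /\ Eset ebar x.1.2 /\ Eset ebar x.2].
Definition open_box (thl thh ebar : R) : set (R * R * R) :=
  [set x | (thl < x.1.1 < thh) /\ (0 < x.1.2 < ebar) /\ (0 < x.2 < ebar)].

Definition coord3 (x : R * R * R) (i : 'I_3) : R :=
  if val i == 0%N then x.1.1 else if val i == 1%N then x.1.2 else x.2.
Definition upd3 (x : R * R * R) (i : 'I_3) (t : R) : R * R * R :=
  if val i == 0%N then (t, x.1.2, x.2)
  else if val i == 1%N then (x.1.1, t, x.2) else (x.1.1, x.1.2, t).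

Definition partial3 (i : 'I_3) (g : R * R * R -> R) (x : R * R * R) : R :=
  derive1 (fun t => g (upd3 x i t)) (coord3 x i).
Definition has_partial3 (i : 'I_3) (g : R * R * R -> R) (x : R * R * R) : Prop :=
  derivable (fun t => g (upd3 x i t)) (coord3 x i) 1.

Definition C2_on (U : set (R * R * R)) (g : R * R * R -> R) : Prop :=
  {within U, continuous g} /\
  (forall i : 'I_3, (forall x, U x -> has_partial3 i g x) /\
     {within U, continuous (partial3 i g)} /\
     forall j : 'I_3, (forall x, U x -> has_partial3 j (partial3 i g) x) /\
       {within U, continuous (partial3 j (partial3 i g))}).

Definition standing_assumptions (ebar thl thh : R) (f : R -> R)
    (pt : R -> R -> R -> R) : Prop :=
  0 < ebar /\ thl < thh /\
   (forall th, Theta thl thh th -> 0 <= f th) /\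
   {within Theta thl thh, continuous f} /\
   (\int[lebesgue_measure]_(th in Theta thl thh) (f th)%:E = 1%E)%E /\
   {within box thl thh ebar, continuous (uncurry3 pt)} /\
   C2_on (open_box thl thh ebar) (uncurry3 pt) /\
   (* strictly increasing in e, strictly decreasing in perceived emission *)
   (forall th e1 e2 et, Theta thl thh th -> Eset ebar e1 -> Eset ebar e2 ->
       Eset ebar et -> e1 < e2 -> pt th e1 et < pt th e2 et) /\
   (forall th e et1 et2, Theta thl thh th -> Eset ebar e -> Eset ebar et1 ->
       Eset ebar et2 -> et1 < et2 -> pt th e et2 < pt th e et1) /\
   (forall th e1 e2 t, Theta thl thh th -> Eset ebar e1 -> Eset ebar e2 ->
       e1 != e2 -> 0 < t < 1 ->
       t * pi_diag pt th e1 + (1 - t) * pi_diag pt th e2 <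
       pi_diag pt th (t * e1 + (1 - t) * e2)) /\
   (forall th, Theta thl thh th -> pi_diag pt th 0 < pi_diag pt th ebar).

Definition is_policy (ebar : R) (d : R -> R) : Prop :=
  forall e, Eset ebar e -> Eset ebar (d e).

Definition Etilde (ebar : R) (d : R -> R) : set R :=
  [set e | Eset ebar e /\ forall e', Eset ebar e' -> d e' = d e -> e' <= e].


Definition maximizer (pt : R -> R -> R -> R) (A : set R) (th e : R) : Prop :=
  A e /\ forall e', A e' -> pi_diag pt th e' <= pi_diag pt th e.

Definition in_D (ebar thl thh : R) (pt : R -> R -> R -> R) (d : R -> R) : Prop :=
  is_policy ebar d /\
  forall th, Theta thl thh th -> exists e, maximizer pt (Etilde ebar d) th e.

Definition pi_d (ebar : R) (pt : R -> R -> R -> R) (d : R -> R) (th : R) : R :=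
  sup [set pi_diag pt th e | e in Etilde ebar d].
Definition gamma_d (ebar : R) (pt : R -> R -> R -> R) (d : R -> R) (th : R) : R :=
  inf [set e | maximizer pt (Etilde ebar d) th e].

Definition Pi (ebar thl thh : R) (f : R -> R) (pt : R -> R -> R -> R)
    (d : R -> R) : \bar R :=
  (\int[lebesgue_measure]_(th in Theta thl thh) (pi_d ebar pt d th * f th)%:E)%E.
Definition Gamma (ebar thl thh : R) (f : R -> R) (pt : R -> R -> R -> R)
    (d : R -> R) : \bar R :=
  (\int[lebesgue_measure]_(th in Theta thl thh) (gamma_d ebar pt d th * f th)%:E)%E.

Definition pareto_efficient (ebar thl thh : R) (f : R -> R)
    (pt : R -> R -> R -> R) (d : R -> R) : Prop :=
  in_D ebar thl thh pt d /\
  ~ exists d', [/\ in_D ebar thl thh pt d',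
      (Pi ebar thl thh f pt d <= Pi ebar thl thh f pt d')%E,
      (Gamma ebar thl thh f pt d' <= Gamma ebar thl thh f pt d)%E &
      ((Pi ebar thl thh f pt d < Pi ebar thl thh f pt d')%E \/
       (Gamma ebar thl thh f pt d' < Gamma ebar thl thh f pt d)%E)].

Definition ehat_image (ebar thl thh : R) (pt : R -> R -> R -> R) : set R :=
  [set e | exists th, Theta thl thh th /\ maximizer pt (Eset ebar) th e].

Definition full_disclosure (ebar thl thh : R) (pt : R -> R -> R -> R)
    (d : R -> R) : Prop :=
  is_policy ebar d /\
  forall e, ehat_image ebar thl thh pt e ->
    forall e', Eset ebar e' -> d e' = d e -> e' = e.

End Model.

From mathcomp Require Import all_boot all_order all_algebra.
From mathcomp Require Import all_classical all_reals all_analysis.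
Set Implicit Arguments. Unset Strict Implicit. Unset Printing Implicit Defensive.
Import Order.TTheory GRing.Theory Num.Theory.
Import numFieldNormedType.Exports.
Local Open Scope classical_set_scope.
Local Open Scope ring_scope.

(* Under full disclosure every emission level that is optimal for some type is
   belief-compatible, so each type attains its unconstrained optimum: pi_dF
   dominates pi_d pointwise and hence Pi(dF) >= Pi(d) for every d in D.  If an
   efficient d had Gamma(d) > Gamma(dF), then dF would Pareto-dominate it. *)

Section integral_pointwise.
Local Open Scope ereal_scope.
Context d (T : measurableType d) (R : realType).
Variables (mu : {measure set T -> \bar R}) (D : set T).

(* No measurability is needed: the integral of a nonnegative function is a
   supremum over the simple functions below it. *)
Lemma ge0_le_integral_pointwise (f g : T -> \bar R) :
  (forall x, D x -> 0 <= f x) -> (forall x, D x -> f x <= g x) ->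
  \int[mu]_(x in D) f x <= \int[mu]_(x in D) g x.
Proof.
move=> f0 fg; have g0 x : D x -> 0 <= g x.
  by move=> Dx; rewrite (le_trans (f0 _ Dx)) ?fg.
rewrite !ge0_integralE//; apply: ereal_sup_le => _ [h hf <-]; exists h => //= x.
by rewrite (le_trans (hf x))// lee_restrict.
Qed.

Lemma le_integral_pointwise (f g : T -> \bar R) :
  (forall x, D x -> f x <= g x) ->
  \int[mu]_(x in D) f x <= \int[mu]_(x in D) g x.
Proof.
move=> fg; have {}fg : {in D, forall x, f x <= g x} by move=> x /set_mem /fg.
rewrite integralE [leRHS]integralE; apply: leeB.
  apply: ge0_le_integral_pointwise => [x _|x /mem_set].
    exact: funepos_ge0.
  exact: funepos_le.
apply: ge0_le_integral_pointwise => [x _|x /mem_set].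
  exact: funeneg_ge0.
exact: funeneg_le.
Qed.

End integral_pointwise.

Lemma within_continuous_comp_into {U V W : topologicalType}
    (A : set U) (B : set V) (f : U -> V) (g : V -> W) :
  f @` A `<=` B -> continuous f -> {within B, continuous g} ->
  {within A, continuous (g \o f)}.
Proof.
move=> fAB cf /subspace_continuousP cg; apply/subspace_continuousP => x Ax.
have fx_within : f @ within A (nbhs x) --> within B (nbhs (f x)).
  move=> P /= BP; rewrite nbhs_filterE.
  have := cf x _ BP; rewrite nbhs_filterE /= => fBP.
  by apply: filterS fBP => y /= BPy Ay; exact/BPy/fAB/imageP.
exact: cvg_comp fx_within (cg _ (fAB _ (imageP _ Ax))).
Qed.

Lemma sup_eq_max (R : realType) (E : set R) x : E x -> ubound E x -> sup E = x.
Proof.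
move=> Ex ubx; apply/le_anti; rewrite ge_sup//=; last by exists x.
by rewrite ub_le_sup//; exists x.
Qed.

Section full_disclosure.
Variables (R : realType) (ebar thl thh : R) (pt : R -> R -> R -> R).
Hypothesis ebar_ge0 : 0 <= ebar.
Hypothesis pt_cont : {within box thl thh ebar, continuous (uncurry3 pt)}.

Lemma pi_diag_continuous th : Theta thl thh th ->
  {within `[0, ebar], continuous (pi_diag pt th)}.
Proof.
move=> Tth; have -> : pi_diag pt th = uncurry3 pt \o (fun e => (th, e, e)) by [].
apply: within_continuous_comp_into pt_cont.
- move=> _ [e + <-]; rewrite /= in_itv /= => /andP[e0 ee].
  by split=> //; split; exact/andP.
- move=> e; have th_e : (fun e : R => (th, e)) @ e --> (nbhs th, nbhs e).
    by apply: cvg_pair; [exact: cvg_cst|exact: cvg_id].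
  exact: cvg_pair th_e cvg_id.
Qed.

Lemma exists_maximizer_Eset th : Theta thl thh th ->
  exists e, maximizer pt (Eset ebar) th e.
Proof.
move=> Tth; have [e /[!in_itv] /= /andP[e0 ee] emax] :=
  EVT_max ebar_ge0 (pi_diag_continuous Tth).
exists e; split=> [|e' /andP[e'0 e'e]]; first exact/andP.
by apply: emax; rewrite in_itv /= e'0.
Qed.

Lemma pi_d_maximizer d th e : maximizer pt (Etilde ebar d) th e ->
  pi_d ebar pt d th = pi_diag pt th e.
Proof.
move=> [Ee emax]; apply: sup_eq_max; first by exists e.
by move=> _ [e' Ee' <-]; exact: emax.
Qed.

Variable dF : R -> R.
Hypothesis dF_full : full_disclosure ebar thl thh pt dF.

Lemma maximizer_full_disclosure th e : Theta thl thh th ->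
  maximizer pt (Eset ebar) th e -> maximizer pt (Etilde ebar dF) th e.
Proof.
move=> Tth [Ee emax]; split=> [|e' [Ee' _]]; last exact: emax.
split=> // e' Ee' dFe'; rewrite (dF_full.2 e _ e' Ee' dFe') //.
by exists th.
Qed.

Lemma in_D_full_disclosure : in_D ebar thl thh pt dF.
Proof.
split=> [|th Tth]; first exact: dF_full.1.
have [e emax] := exists_maximizer_Eset Tth.
by exists e; exact: maximizer_full_disclosure.
Qed.

Lemma pi_d_le_full_disclosure d th :
  in_D ebar thl thh pt d -> Theta thl thh th ->
  pi_d ebar pt d th <= pi_d ebar pt dF th.
Proof.
move=> [_ d_attained] Tth; have [ed edmax] := d_attained th Tth.
have [e emax] := exists_maximizer_Eset Tth.
rewrite (pi_d_maximizer edmax) (pi_d_maximizer (maximizer_full_disclosure Tth emax)).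
by apply: emax.2; case: edmax => -[].
Qed.

Lemma Pi_le_full_disclosure f d : (forall th, Theta thl thh th -> 0 <= f th) ->
  in_D ebar thl thh pt d ->
  (Pi ebar thl thh f pt d <= Pi ebar thl thh f pt dF)%E.
Proof.
move=> f_ge0 dD; apply: le_integral_pointwise => th Tth.
by rewrite lee_fin ler_wpM2r ?f_ge0 ?pi_d_le_full_disclosure.
Qed.

End full_disclosure.

Lemma pareto_efficient_Gamma_le (R : realType) (ebar thl thh : R) (f : R -> R)
    (pt : R -> R -> R -> R) (d d' : R -> R) :
  pareto_efficient ebar thl thh f pt d -> in_D ebar thl thh pt d' ->
  (Pi ebar thl thh f pt d <= Pi ebar thl thh f pt d')%E ->
  (Gamma ebar thl thh f pt d <= Gamma ebar thl thh f pt d')%E.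
Proof.
move=> [_ not_dominated] d'D Pi_le; rewrite leNgt; apply/negP => Gamma_lt.
by apply: not_dominated; exists d'; split=> //; [exact: ltW|right].
Qed.

Theorem proposition5 (R : realType) (ebar thl thh : R) (f : R -> R)
    (pt : R -> R -> R -> R) (dF : R -> R) :
  standing_assumptions ebar thl thh f pt ->
  full_disclosure ebar thl thh pt dF ->
  forall d : R -> R, pareto_efficient ebar thl thh f pt d ->
    (Gamma ebar thl thh f pt d <= Gamma ebar thl thh f pt dF)%E.
Proof.
move=> [ebar_gt0 [_ [f_ge0 [_ [_ [pt_cont _]]]]]] dF_full d d_eff.
have ebar_ge0 := ltW ebar_gt0.
apply: (pareto_efficient_Gamma_le d_eff).
  exact: (in_D_full_disclosure ebar_ge0 pt_cont dF_full).
exact: (Pi_le_full_disclosure ebar_ge0 pt_cont dF_full f_ge0 d_eff.1).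
Qed.
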